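(* Let $(V,\mathcal H,\iota,W)$ be an abelian generalized functional theory with set of weights $\Omega$. Then the set of representable densities $\iota^*(\mathcal P)=\iota^*(\mathcal E)=\mathrm{conv}(\Omega)$ is a convex polytope of dimension $\dim V-\dim\iota^{-1}(\mathrm{span}\{\mathbb 1\})$.
   Context: A generalized functional theory is a tuple $(V,\mathcal H,\iota,W)$ with $V$ a finite-dimensional real vector space, $\mathcal H$ a finite-dimensional complex Hilbert space, $\iota:V\to i\mathfrak u(\mathcal H)$ linear into the Hermitian operators, $W$ Hermitian. States are regarded as elements of $(i\mathfrak u(\mathcal H))^*$ via the trace pairing; $\iota^*$ is the dual map; $\mathcal P$ = pure states, $\mathcal E$ = density operators; $\mathbb 1$ is the identity on $\mathcal H$. The theory is abelian if $[\iota(v),\iota(v')]=0$ for all $v,v'$. A weight is $\alpha\in V^*$ such that some nonzero $\psi$ satisfies $\iota(v)\psi=\langle\alpha,v\rangle\psi$ for all $v$; $\Omega$ denotes the (finite) set of weights. *)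

From HB Require Import structures.
From mathcomp Require Import all_boot all_order all_algebra.
From mathcomp Require Import complex.
From mathcomp Require Import boolp classical_sets reals.
Set Implicit Arguments. Unset Strict Implicit. Unset Printing Implicit Defensive.
Import Order.TTheory GRing.Theory Num.Theory.
Local Open Scope ring_scope.
Local Open Scope classical_set_scope.
Local Open Scope complex_scope.

(* Conventions: V = R^n (row vectors 'rV[R]_n), V^* identified with 'rV[R]_n
   via the pairing  <alpha, v> = sum_k alpha_k v_k ;
   H = C^(m+1) (a nonzero finite-dim complex Hilbert space), operators are
   'M[R[i]]_(m.+1). *)

Section Defs.
Variable R : realType.
Local Notation C := (R[i]).

Definition pairing n (alpha v : 'rV[R]_n) : R := \sum_k alpha 0 k * v 0 k.

Definition ctr p q (A : 'M[C]_(p, q)) : 'M[C]_(q, p) := (map_mx Num.conj A)^T.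

Definition herm_op p (A : 'M[C]_p) : Prop := ctr A = A.

Definition real_linear n p (iota : 'rV[R]_n -> 'M[C]_p) : Prop :=
  forall (a : R) (v w : 'rV[R]_n), iota (a *: v + w) = a%:C *: iota v + iota w.

Definition abelian_theory n p (iota : 'rV[R]_n -> 'M[C]_p) : Prop :=
  forall v v', iota v *m iota v' = iota v' *m iota v.

Definition pure_states p : set 'M[C]_p :=
  [set rho | exists psi : 'cV[C]_p, ctr psi *m psi = 1 /\ rho = psi *m ctr psi].

Definition density_ops p : set 'M[C]_p :=
  [set rho | herm_op rho /\ (forall x : 'cV[C]_p, 0 <= (ctr x *m rho *m x) 0 0)
             /\ \tr rho = 1].

(* iota^* (X): image of a set of states under the dual map, states acting on
   Hermitian operators by the trace pairing rho(A) = tr(rho A). *)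
Definition iota_star n p (iota : 'rV[R]_n -> 'M[C]_p) (X : set 'M[C]_p)
  : set 'rV[R]_n :=
  [set alpha | exists rho, X rho /\
     forall v, \tr (rho *m iota v) = (pairing alpha v)%:C].

Definition weights n p (iota : 'rV[R]_n -> 'M[C]_p) : set 'rV[R]_n :=
  [set alpha | exists psi : 'cV[C]_p, psi != 0 /\
     forall v, iota v *m psi = (pairing alpha v)%:C *: psi].

Definition conv n (S : set 'rV[R]_n) : set 'rV[R]_n :=
  [set x | exists k (s : 'I_k -> 'rV[R]_n) (l : 'I_k -> R),
     (forall i, S (s i)) /\ (forall i, 0 <= l i) /\ \sum_i l i = 1 /\
     x = \sum_i l i *: s i].

Definition is_polytope n (S : set 'rV[R]_n) : Prop :=
  exists s : seq 'rV[R]_n, S = conv [set` s].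

Definition subspace_dim n (K : set 'rV[R]_n) (d : nat) : Prop :=
  exists k (M : 'M[R]_(k, n)), (forall v, K v <-> (v <= M)%MS) /\ \rank M = d.

Definition affine_dim n (S : set 'rV[R]_n) (d : nat) : Prop :=
  exists k (M : 'M[R]_(k, n)),
    (forall i, exists x y, S x /\ S y /\ row i M = x - y) /\
    (forall x y, S x -> S y -> (x - y <= M)%MS) /\ \rank M = d.

Definition preimage_span1 n p (iota : 'rV[R]_n -> 'M[C]_p) : set 'rV[R]_n :=
  [set v | exists c : R, iota v = c%:C%:M].

End Defs.

From HB Require Import structures.
From mathcomp Require Import all_boot all_order all_algebra.
From mathcomp Require Import complex.
From mathcomp Require Import boolp classical_sets reals.
Import Order.TTheory GRing.Theory Num.Theory.
Local Open Scope ring_scope.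
Local Open Scope classical_set_scope.
Local Open Scope complex_scope.
Set Implicit Arguments. Unset Strict Implicit. Unset Printing Implicit Defensive.

(* Commuting Hermitian matrices are simultaneously unitarily diagonalisable, so
   there are a unitary U and a_0, ..., a_m in V^* with
   U iota(v) U^* = diag(<a_j, v>) for all v; the a_j are exactly the weights.
   Through iota^*, a state rho only sees the diagonal of U rho U^*, which is a
   probability vector, so iota^*(E) lies in conv(Omega); conversely the pure
   state with amplitudes sqrt(mu_j) in the eigenbasis is sent to
   sum_j mu_j a_j.  Finally iota(v) is scalar iff all <a_j, v> coincide, i.e.
   iff v annihilates the differences a_j - a_0, which span the direction of
   the affine hull of conv(Omega); rank-nullity gives the dimension. *)

Section ConjTranspose.
Variable R : realType.

Lemma ctr_mul p q r (A : 'M[R[i]]_(p, q)) (B : 'M[R[i]]_(q, r)) :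
  ctr (A *m B) = ctr B *m ctr A.
Proof. by rewrite /ctr map_mxM trmx_mul. Qed.

Lemma ctrK p q (A : 'M[R[i]]_(p, q)) : ctr (ctr A) = A.
Proof. by apply/matrixP => i j; rewrite !mxE conjCK. Qed.

Lemma ctrE p q (A : 'M[R[i]]_(p, q)) i j : ctr A i j = (A j i)^*%R.
Proof. by rewrite !mxE. Qed.

Lemma ctr_delta p (j : 'I_p) : ctr (delta_mx j 0 : 'cV[R[i]]_p) = delta_mx 0 j.
Proof. by apply/matrixP => i k; rewrite !mxE andbC rmorph_nat. Qed.

Lemma herm_trig_diag p (A : 'M[R[i]]_p) :
  herm_op A -> is_trig_mx A -> A = diag_mx (\row_j (complex.Re (A j j))%:C).
Proof.
move=> hermA /is_trig_mxP trigA; apply/matrixP => i j; rewrite !mxE.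
have Aconj k l : A k l = (A l k)^*%R by rewrite -{1}hermA ctrE.
case: (eqVneq i j) => [<-|nij].
  by rewrite mulr1n RRe_real //; apply/CrealP; rewrite -Aconj.
rewrite mulr0n; case: (ltngtP i j) => [ij|ji|/val_inj eij]; first exact: trigA.
  by rewrite Aconj trigA // conjC0.
by rewrite eij eqxx in nij.
Qed.

End ConjTranspose.

Section Pairing.
Variables (R : realType) (n : nat).

Lemma pairingE (x v : 'rV[R]_n) : pairing x v = (x *m v^T) 0 0.
Proof. by rewrite mxE; apply: eq_bigr => k _; rewrite mxE. Qed.

Lemma pairing_delta (x : 'rV[R]_n) k : pairing x (delta_mx 0 k) = x 0 k.
Proof.
rewrite /pairing (bigD1 k) //= mxE !eqxx mulr1 big1 ?addr0 // => j njk.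
by rewrite mxE (negbTE njk) andbF mulr0.
Qed.

Lemma pairing_inj (x y : 'rV[R]_n) :
  (forall v, pairing x v = pairing y v) -> x = y.
Proof. by move=> xy; apply/rowP => k; rewrite -!pairing_delta xy. Qed.

Lemma pairingBl (x y v : 'rV[R]_n) :
  pairing (x - y) v = pairing x v - pairing y v.
Proof. by rewrite /pairing -sumrB; apply: eq_bigr => k _; rewrite !mxE mulrBl. Qed.

Lemma pairing_sumZl k (l : 'I_k -> R) (s : 'I_k -> 'rV[R]_n) v :
  pairing (\sum_i l i *: s i) v = \sum_i l i * pairing (s i) v.
Proof.
rewrite pairingE mulmx_suml summxE; apply: eq_bigr => i _.
by rewrite -scalemxAl mxE pairingE.
Qed.

Lemma mulmx_tr_pairing k (v : 'rV[R]_n) (B : 'M[R]_(k, n)) j :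
  (v *m B^T) 0 j = pairing (row j B) v.
Proof.
by rewrite pairingE !mxE; apply: eq_bigr => l _; rewrite !mxE mulrC.
Qed.

End Pairing.

Section RealLinear.
Variables (R : realType) (n p : nat) (iota : 'rV[R]_n -> 'M[R[i]]_p).
Hypothesis lin : real_linear iota.

Lemma real_linear0 : iota 0 = 0.
Proof.
have := lin 1 0 0; rewrite scaler0 addr0 rmorph1 scale1r.
by move/(congr1 (fun X => X - iota 0)); rewrite addrK subrr => <-.
Qed.

Lemma real_linearD v w : iota (v + w) = iota v + iota w.
Proof. by rewrite -[v in LHS]scale1r lin rmorph1 scale1r. Qed.

Lemma real_linearZ a v : iota (a *: v) = a%:C *: iota v.
Proof. by rewrite -[_ *: v]addr0 lin real_linear0 addr0. Qed.

Lemma real_linear_sum I (r : seq I) (P : pred I) F :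
  iota (\sum_(k <- r | P k) F k) = \sum_(k <- r | P k) iota (F k).
Proof. exact: (big_morph iota real_linearD real_linear0). Qed.

End RealLinear.

Section ConvexHull.
Variables (R : realType) (n : nat).

Lemma sub_conv (S : set 'rV[R]_n) : S `<=` conv S.
Proof.
move=> w Sw; exists 1%N, (fun=> w), (fun=> 1).
by split; [|split; [move=> _; exact: ler01|split]]; rewrite ?big_ord1 ?scale1r.
Qed.

Variables (k : nat) (a : 'I_k -> 'rV[R]_n).
Local Notation A := [set w | exists j, w = a j].

Lemma conv_familyP x :
  conv A x <->
  exists mu : 'I_k -> R,
    [/\ forall j, 0 <= mu j, \sum_j mu j = 1 & x = \sum_j mu j *: a j].
Proof.
split; last first.
  by move=> [mu [mu_ge0 mu_sum ->]]; exists k, a, mu; do !split => // j; exists j.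
move=> [k' [s [l [sA [l_ge0 [l_sum ->]]]]]].
have f_spec i : exists j, s i == a j by have [j ->] := sA i; exists j.
pose f i := xchoose (f_spec i).
have sE i : s i = a (f i) := eqP (xchooseP (f_spec i)).
exists (fun j => \sum_(i | f i == j) l i); split.
- by move=> j; apply: sumr_ge0.
- by rewrite -l_sum (partition_big f xpredT).
- rewrite (partition_big f xpredT) //=; apply: eq_bigr => j _.
  by rewrite scaler_suml; apply: eq_bigr => i /eqP fi; rewrite sE fi.
Qed.

Lemma conv_family_polytope : is_polytope (conv A).
Proof.
exists [seq a j | j <- enum 'I_k]; congr conv; apply/seteqP; split => w /=.
  by move=> [j ->]; apply: map_f; rewrite mem_enum.
by move=> /mapP[j _ ->]; exists j.
Qed.

Definition differences_mx (j0 : 'I_k) : 'M[R]_(k, n) := \matrix_j (a j - a j0).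

Lemma conv_sub_differences j0 x : conv A x -> (x - a j0 <= differences_mx j0)%MS.
Proof.
move/conv_familyP => [mu [_ mu_sum ->]].
have -> : \sum_j mu j *: a j - a j0 = \sum_j mu j *: (a j - a j0).
  rewrite -[X in _ - X]scale1r -mu_sum scaler_suml -sumrB.
  by apply: eq_bigr => j _; rewrite scalerBr.
apply: summx_sub => j _; apply: scalemx_sub.
by rewrite -(rowK (fun j => a j - a j0)) row_sub.
Qed.

Lemma affine_dim_conv_family j0 : affine_dim (conv A) (\rank (differences_mx j0)).
Proof.
exists k, (differences_mx j0); split; [|split] => //.
  move=> j; exists (a j), (a j0).
  by split; [|split]; [apply: sub_conv; exists j | apply: sub_conv; exists j0 |
                       rewrite rowK].
move=> x y Ax Ay; have -> : x - y = (x - a j0) - (y - a j0).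
  by rewrite opprB addrA subrK.
by rewrite addmx_sub ?eqmx_opp ?conv_sub_differences.
Qed.

End ConvexHull.

Section States.
Variables (R : realType) (n p : nat) (iota : 'rV[R]_n -> 'M[R[i]]_p).

Lemma iota_star_subset (X Y : set 'M[R[i]]_p) :
  X `<=` Y -> iota_star iota X `<=` iota_star iota Y.
Proof. by move=> XY alpha [rho [Xrho rho_alpha]]; exists rho; split => //; apply: XY. Qed.

Lemma pure_states_sub_density_ops : @pure_states R p `<=` @density_ops R p.
Proof.
move=> _ [psi [psi_norm ->]]; split; [|split].
- by rewrite /herm_op ctr_mul ctrK.
- move=> x; rewrite !mulmxA -[ctr x *m psi *m _ *m _]mulmxA.
  have -> : ctr psi *m x = ctr (ctr x *m psi) by rewrite ctr_mul ctrK.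
  by rewrite mxE big_ord1 ctrE mul_conjC_ge0.
- by rewrite mxtrace_mulC psi_norm mxtrace1.
Qed.

End States.

Definition diagonalizes (R : realType) n p (iota : 'rV[R]_n -> 'M[R[i]]_p)
    (U : 'M[R[i]]_p) (a : 'I_p -> 'rV[R]_n) :=
  U *m ctr U = 1%:M /\
  forall v, U *m iota v *m ctr U = diag_mx (\row_j (pairing (a j) v)%:C).

Lemma diagonalization_exists (R : realType) n p (iota : 'rV[R]_n -> 'M[R[i]]_p) :
  real_linear iota -> (forall v, herm_op (iota v)) -> abelian_theory iota ->
  exists U a, diagonalizes iota U a.
Proof.
move=> lin herm ab.
pose E k := iota (delta_mx 0 k).
have comm : {in [seq E k | k <- enum 'I_n] &, forall A B, comm_mx A B}.
  by move=> A B /mapP[k _ ->] /mapP[l _ ->]; exact: ab.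
have [P P_unitary /allP P_trig] := cotrigonalization comm.
have PP : P *m ctr P = 1%:M by rewrite /ctr map_trmx; apply/unitarymxP.
pose T k := P *m E k *m ctr P.
have T_trig k : is_trig_mx (T k).
  have := P_trig (E k); rewrite map_f ?mem_enum // => /(_ isT).
  by rewrite inE /= /similar_to (conjymx _ P_unitary) -map_trmx -/(ctr P).
have T_herm k : herm_op (T k) by rewrite /herm_op /T !ctr_mul ctrK herm mulmxA.
pose a j := \row_k complex.Re (T k j j).
exists P, a; split => // v.
rewrite {1}(row_sum_delta v) (real_linear_sum lin) mulmx_sumr mulmx_suml.
under eq_bigr => k _ do rewrite (real_linearZ lin) -scalemxAr -scalemxAl -/(T k)
  (herm_trig_diag (T_herm k) (T_trig k)) -linearZ.
rewrite -linear_sum /=; congr diag_mx; apply/rowP => j.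
rewrite summxE !mxE /pairing rmorph_sum; apply: eq_bigr => k _.
by rewrite !mxE rmorphM mulrC.
Qed.

Section Diagonalized.
Variables (R : realType) (n p : nat) (iota : 'rV[R]_n -> 'M[R[i]]_p).
Variables (U : 'M[R[i]]_p) (a : 'I_p -> 'rV[R]_n).
Hypothesis diagU : diagonalizes iota U a.

Local Notation D v := (diag_mx (\row_j (pairing (a j) v)%:C)).

Lemma mulmx_ctrU : U *m ctr U = 1%:M.
Proof. by case: diagU. Qed.

Lemma mul_ctrU_mx : ctr U *m U = 1%:M.
Proof. exact/mulmx1C/mulmx_ctrU. Qed.

Lemma iota_diagE v : iota v = ctr U *m D v *m U.
Proof.
case: diagU => _ <-.
by rewrite !mulmxA mul_ctrU_mx mul1mx -mulmxA mul_ctrU_mx mulmx1.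
Qed.

Lemma weightsP w : weights iota w <-> exists j, w = a j.
Proof.
split.
  move=> [psi [psi_neq0 psi_eigen]].
  pose phi := U *m psi.
  have phi_eigen v : D v *m phi = (pairing w v)%:C *: phi.
    rewrite /phi -(proj2 diagU) -!mulmxA [ctr U *m _]mulmxA mul_ctrU_mx.
    by rewrite mul1mx psi_eigen -scalemxAr.
  have psiE : psi = ctr U *m phi by rewrite mulmxA mul_ctrU_mx mul1mx.
  have [j phi_j|phi0] := pickP (fun j => phi j 0 != 0); last first.
    case/eqP: psi_neq0; rewrite psiE; apply/matrixP => i k.
    rewrite mxE big1 ?mxE // => j _; rewrite ord1.
    by move/negbFE/eqP: (phi0 j) => ->; rewrite mulr0.
  exists j; apply: pairing_inj => v; apply: complexI; apply: (mulIf phi_j).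
  by move/matrixP: (phi_eigen v) => /(_ j 0); rewrite mul_diag_mx !mxE.
move=> [j ->]; exists (ctr U *m delta_mx j 0); split.
  apply/eqP => /(congr1 (mulmx U)); rewrite mulmxA mulmx_ctrU mul1mx mulmx0.
  by move/matrixP => /(_ j 0); rewrite !mxE !eqxx => /eqP; rewrite oner_eq0.
move=> v; rewrite iota_diagE -!mulmxA (mulmxA U) mulmx_ctrU mul1mx scalemxAr.
congr (_ *m _); apply/matrixP => i k; rewrite mul_diag_mx !mxE ord1.
by case: (eqVneq i j) => [->|]; rewrite ?mulr1 ?mulr0.
Qed.

Lemma weightsE : weights iota = [set w | exists j, w = a j].
Proof. by apply/seteqP; split => w /weightsP. Qed.

Lemma tr_mul_iota rho v :
  \tr (rho *m iota v) = \sum_j (U *m rho *m ctr U) j j * (pairing (a j) v)%:C.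
Proof.
rewrite iota_diagE !mulmxA mxtrace_mulC !mulmxA mul_mx_diag.
by apply: eq_bigr => j _; rewrite !mxE.
Qed.

Lemma iota_star_density_sub_conv :
  iota_star iota (@density_ops R p) `<=` conv (weights iota).
Proof.
move=> alpha [rho [[_ [rho_ge0 rho_tr]] rho_alpha]].
pose X := U *m rho *m ctr U.
have X_ge0 j : 0 <= X j j.
  have := rho_ge0 (ctr U *m delta_mx j 0).
  by rewrite ctr_mul ctrK ctr_delta !mulmxA -rowE -!row_mul -colE !mxE.
pose l j := complex.Re (X j j).
have lE j : (l j)%:C = X j j := RRe_real (ger0_real (X_ge0 j)).
exists p, a, l; split; first by move=> j; apply/weightsP; exists j.
split; first by move=> j; rewrite -ler0c lE.
split.
  apply: complexI; rewrite rmorph_sum rmorph1 /= -rho_tr.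
  under eq_bigr do rewrite lE.
  by rewrite -/(\tr X) mxtrace_mulC mulmxA mul_ctrU_mx mul1mx.
apply: pairing_inj => v; apply: complexI.
rewrite -rho_alpha tr_mul_iota pairing_sumZl rmorph_sum; apply: eq_bigr => j _.
by rewrite rmorphM /= lE.
Qed.

Lemma iota_star_pure_mixture (mu : 'I_p -> R) :
  (forall j, 0 <= mu j) -> \sum_j mu j = 1 ->
  iota_star iota (@pure_states R p) (\sum_j mu j *: a j).
Proof.
move=> mu_ge0 mu_sum.
pose phi : 'cV[R[i]]_p := \col_j (Num.sqrt (mu j))%:C.
have phi_sqr j : phi j 0 * (phi j 0)^*%R = (mu j)%:C.
  have sqrt_real : ((Num.sqrt (mu j))%:C)^*%R = (Num.sqrt (mu j))%:C.
    exact: conjc_real.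
  by rewrite mxE sqrt_real -rmorphM -expr2 sqr_sqrtr.
pose psi := ctr U *m phi.
have Upsi : U *m psi = phi by rewrite mulmxA mulmx_ctrU mul1mx.
exists (psi *m ctr psi); split.
  exists psi; split => //.
  rewrite ctr_mul ctrK mulmxA -(mulmxA (ctr phi)) mulmx_ctrU mulmx1.
  apply/matrixP => i j; rewrite !ord1 !mxE.
  under eq_bigr do rewrite ctrE mulrC phi_sqr.
  by rewrite -rmorph_sum mu_sum.
move=> v; rewrite tr_mul_iota.
have -> : U *m (psi *m ctr psi) *m ctr U = phi *m ctr phi.
  by rewrite mulmxA Upsi -mulmxA -ctr_mul Upsi.
under eq_bigr do rewrite mxE big_ord1 ctrE phi_sqr -rmorphM.
by rewrite -rmorph_sum pairing_sumZl.
Qed.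

Lemma conv_sub_iota_star_pure :
  conv (weights iota) `<=` iota_star iota (@pure_states R p).
Proof.
rewrite weightsE => _ /conv_familyP[mu [mu_ge0 mu_sum ->]].
exact: iota_star_pure_mixture.
Qed.

Lemma preimage_span1E j0 :
  preimage_span1 iota = [set v | (v <= kermx (differences_mx a j0)^T)%MS].
Proof.
have differencesE v j :
    (v *m (differences_mx a j0)^T) 0 j = pairing (a j) v - pairing (a j0) v.
  by rewrite mulmx_tr_pairing rowK pairingBl.
apply/seteqP; split => v /=; rewrite sub_kermx.
  move=> [c iota_c].
  have pairing_c j : pairing (a j) v = c.
    have := proj2 diagU v; rewrite iota_c scalar_mxC -mulmxA mulmx_ctrU mulmx1.
    by move/matrixP => /(_ j j); rewrite !mxE !eqxx !mulr1n => /complexI.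
  by apply/eqP/rowP => j; rewrite differencesE !pairing_c subrr mxE.
move/eqP/rowP => ker_v; exists (pairing (a j0) v).
have pairing_j0 j : pairing (a j) v = pairing (a j0) v.
  by apply/eqP; rewrite -subr_eq0 -differencesE ker_v mxE.
rewrite iota_diagE.
have -> : \row_j (pairing (a j) v)%:C = const_mx (pairing (a j0) v)%:C.
  by apply/rowP => j; rewrite !mxE pairing_j0.
by rewrite diag_const_mx scalar_mxC -mulmxA mul_ctrU_mx mulmx1.
Qed.

End Diagonalized.

Theorem proposition4p7 (R : realType) (n m : nat)
    (iota : 'rV[R]_n -> 'M[R[i]]_m.+1) (W : 'M[R[i]]_m.+1) :
  real_linear iota ->
  (forall v, herm_op (iota v)) ->
  herm_op W ->
  abelian_theory iota ->
  [/\ iota_star iota (@pure_states R m.+1) = conv (weights iota),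
      iota_star iota (@density_ops R m.+1) = conv (weights iota),
      is_polytope (conv (weights iota)) &
      exists d, subspace_dim (preimage_span1 iota) d /\
                affine_dim (conv (weights iota)) (n - d)].
Proof.
move=> lin herm _ ab.
have [U [a diagU]] := diagonalization_exists lin herm ab.
have pure_dens := iota_star_subset (iota := iota) (@pure_states_sub_density_ops R m.+1).
have dens_conv := iota_star_density_sub_conv diagU.
have conv_pure := conv_sub_iota_star_pure diagU.
pose K := kermx (differences_mx a ord0)^T.
split.
- by apply/seteqP; split => x; [move/pure_dens/dens_conv | move/conv_pure].
- by apply/seteqP; split => x; [move/dens_conv | move/conv_pure/pure_dens].
- by rewrite (weightsE diagU); exact: conv_family_polytope.
- exists (\rank K); split.
    by exists n, K; split => // v; rewrite (preimage_span1E diagU ord0).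
  rewrite mxrank_ker mxrank_tr subKn ?rank_leq_col // (weightsE diagU).
  exact: affine_dim_conv_family.
Qed.
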